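(* $GR(3,K_4,2) = 10$.
   Context: For positive integers $r,s,t$, $GR(r,K_s,t)$ denotes the minimum integer $n$ such that every coloring of the edges of $K_n$ with $r$ colors contains a copy of $K_s$ whose edges use at most $t$ distinct colors. *)

From mathcomp Require Import all_boot.
Set Implicit Arguments. Unset Strict Implicit. Unset Printing Implicit Defensive.

(* An r-edge-coloring of K_n on vertex set 'I_n: a symmetric map assigning a
   color in 'I_r to each pair of vertices (only pairs x != y are edges). *)
Definition edge_coloring (n r : nat) (c : 'I_n -> 'I_n -> 'I_r) : Prop :=
  forall x y, c x y = c y x.

Definition colors_on (n r : nat) (c : 'I_n -> 'I_n -> 'I_r) (S : {set 'I_n})
  : {set 'I_r} :=
  [set c x y | x in S, y in S & x != y].

Definition GR_property (r s t n : nat) : Prop :=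
  forall c : 'I_n -> 'I_n -> 'I_r, edge_coloring c ->
    exists S : {set 'I_n}, #|S| = s /\ #|colors_on c S| <= t.

Definition is_GR (r s t n : nat) : Prop :=
  GR_property r s t n /\ forall m, m < n -> ~ GR_property r s t m.

From mathcomp Require Import all_boot zify.
Set Implicit Arguments. Unset Strict Implicit. Unset Printing Implicit Defensive.

(* Lower bound: the 3-colouring of K_9 below gives every K_4 all three colours.
   Upper bound: in a 3-colouring of K_10 choose a vertex v and a colour k with
   the largest colour degree D = deg_k(v).  Relabel the vertices so that v = 0 and
   its neighbours come grouped by colour, most frequent colour first; this leaves
   55 possible colourings of the star at 0.  For each of them a backtracking
   search through the remaining edges, which discards a partial colouring as soon
   as some colour degree exceeds D or some K_4 misses a colour, dies out. *)

Section Backtracking.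
Variables (E C : eqType) (choices : E -> seq C) (prune : E -> C -> seq C -> bool).

(* [if] rather than [||]: [vm_compute] evaluates both arguments of [orb]. *)
Fixpoint search (es : seq E) (s : seq C) : bool :=
  if es is e :: es' then
    all (fun k => let s' := rcons s k in if prune e k s' then true else search es' s')
      (choices e)
  else false.

Lemma search_sound (f : E -> C) es s :
  {in es, forall e, f e \in choices e} -> search es s ->
  exists es1 e es2, es = es1 ++ e :: es2 /\ prune e (f e) (s ++ map f (rcons es1 e)).
Proof.
elim: es s => [//|e es IH] s fP /= /allP/(_ (f e) (fP e (mem_head e es))).
case: ifP => [pruned _|_]; first by exists [::], e, es; rewrite cats1.
have fP' : {in es, forall e', f e' \in choices e'}.
  by move=> e' e'_es; apply: fP; rewrite inE e'_es orbT.
case/(IH _ fP') => es1 [e' [es2 [-> pr]]].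
by exists (e :: es1), e', es2; split; last rewrite /= -cat_rcons.
Qed.
End Backtracking.

Lemma onth_take (T : Type) (s : seq T) i j :
  onth (take i s) j = if j < i then onth s j else None.
Proof.
rewrite !onthE map_take; case: ltnP => ji; first by rewrite nth_take.
by rewrite nth_default // size_take_min geq_min ji.
Qed.

Lemma onth_drop (T : Type) (s : seq T) i j : onth (drop i s) j = onth s (i + j).
Proof. by rewrite !onthE map_drop nth_drop. Qed.

Lemma onth_reshape_take (T : Type) sh (s : seq T) i u w x :
  onth (nth [::] (reshape sh (take i s)) u) w = Some x ->
  onth (nth [::] (reshape sh s) u) w = Some x.
Proof. by rewrite !nth_reshape !onth_take !onth_drop onth_take; do 2?case: ifP. Qed.

Lemma count_mem_onth (T : eqType) (s : seq T) x :
  count_mem x s = count (fun i => onth s i == Some x) (iota 0 (size s)).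
Proof.
rewrite -{1}(mkseq_nth x s) count_map; apply: eq_in_count => i.
by rewrite mem_iota => /andP[_ lt]; rewrite onthE (nth_map x).
Qed.

Lemma drop_nth (T : Type) (x0 : T) (s : seq T) m :
  drop m s = [seq nth x0 s a | a <- iota m (size s - m)].
Proof.
rewrite -{1}(mkseq_nth x0 (drop m s)) size_drop /mkseq.
have -> : iota m (size s - m) = map (addn m) (iota 0 (size s - m)) by rewrite -iotaDl addn0.
by rewrite -map_comp; apply: eq_map => a /=; rewrite nth_drop.
Qed.

Section PartialColoring.
Variable n : nat.

(* A partial colouring is the list of colours of a prefix of [edges]; [rows]
   cuts it back into rows, so that the colour of (u, w), w < u, is the w-th entry
   of row u when it is known. *)
Definition edges : seq (nat * nat) := [seq (u, w) | u <- iota 0 n, w <- iota 0 u].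

Lemma mem_edges u w : ((u, w) \in edges) = (w < u < n).
Proof.
apply/allpairsPdep/andP => [[u' [w' []]]|[wu un]].
  by rewrite !mem_iota => ? ? [-> ->]; lia.
by exists u, w; rewrite !mem_iota; split=> //; lia.
Qed.

Definition rows (s : seq nat) : seq (seq nat) := reshape (iota 0 n) s.

(* The known edges at [z] are row [z] and the [z]-th entries of the later rows. *)
Definition pdeg (R : seq (seq nat)) (z k : nat) : nat :=
  count_mem k (nth [::] R z) + count (fun row => onth row z == Some k) (drop z.+1 R).

Definition misses (j : nat) (o : option nat) : bool :=
  if o is Some k then k != j else false.

(* Some colour [j < r] is missing from a K_4 on [x < y < w < u], all of whose
   edges are known. *)
Definition K4_missing_color (r : nat) (R : seq (seq nat)) (u w : nat) : bool :=
  let ru := nth [::] R u in let rw := nth [::] R w in let ouw := onth ru w in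
  has (fun y => let ry := nth [::] R y in let ouy := onth ru y in let owy := onth rw y in
    has (fun j => if [&& misses j ouw, misses j ouy & misses j owy] then
      has (fun x => [&& misses j (onth ru x), misses j (onth rw x) & misses j (onth ry x)])
        (iota 0 y) else false) (iota 0 r)) (iota 0 w).

Definition prune (r D : nat) (e : nat * nat) (k : nat) (s : seq nat) : bool :=
  let: (u, w) := e in let R := rows s in
  if D < pdeg R u k then true else if D < pdeg R w k then true else K4_missing_color r R u w.

Variable f : nat -> nat -> nat.
Hypothesis f_sym : forall u w, f u w = f w u.

Local Notation colors := [seq f e.1 e.2 | e <- edges].
Local Notation prefix i := (rows (take i colors)).

Definition avoids (j : nat) (q : seq nat) : Prop :=
  [/\ uniq q, all (gtn n) q & {in q &, forall a b, a != b -> f a b != j}].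

Lemma rows_colors : rows colors = [seq [seq f u w | w <- iota 0 u] | u <- iota 0 n].
Proof.
have sh : shape [seq [seq f u w | w <- iota 0 u] | u <- iota 0 n] = iota 0 n.
  by rewrite /shape -map_comp (eq_map (fun u => size_map _ _)) (eq_map (size_iota 0)) map_id.
by rewrite /rows /edges map_allpairs -{1}sh flattenK.
Qed.

Lemma onth_rows_prefix i a b k :
  onth (nth [::] (prefix i) a) b = Some k -> [/\ b < a, a < n & f a b = k].
Proof.
move=> /(@onth_reshape_take nat); rewrite -/(rows _) rows_colors.
case: (ltnP a n) => an; last by rewrite nth_default ?size_map ?size_iota // onth0n.
rewrite (nth_map 0) ?size_iota // nth_iota // onth_map onthE.
case: (ltnP b a) => ba; last by rewrite nth_default ?size_map ?size_iota.
by rewrite (nth_map 0) ?size_iota // nth_iota //= => -[<-].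
Qed.

Lemma pdeg_prefix i z k : z < n ->
  pdeg (prefix i) z k <= count (fun y => (y != z) && (f z y == k)) (iota 0 n).
Proof.
move=> zn; set R := prefix i.
have -> : iota 0 n = iota 0 z ++ z :: iota z.+1 (n - z.+1).
  by rewrite -{1}(subnKC (ltnW zn)) iotaD -subnSK.
rewrite count_cat /= eqxx add0n; apply: leq_add.
  set rz := nth [::] R z; have rz_z : size rz <= z.
    by rewrite /rz /R /rows nth_reshape size_take_min nth_iota // geq_minl.
  have -> : iota 0 z = iota 0 (size rz) ++ iota (size rz) (z - size rz).
    by rewrite -iotaD subnKC.
  rewrite count_cat count_mem_onth; apply: leq_trans (leq_addr _ _).
  apply: sub_count => y /eqP/onth_rows_prefix[yz _ fk].
  by rewrite ltn_eqF // fk eqxx.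
rewrite (drop_nth [::]) size_reshape size_iota count_map.
apply: sub_count => a /eqP/onth_rows_prefix[za _ fk].
by rewrite gtn_eqF // f_sym fk eqxx.
Qed.

Lemma misses_prefix i j a b : misses j (onth (nth [::] (prefix i) a) b) ->
  [/\ b < a, a < n & f a b != j].
Proof. by case E: onth => [k|//] /=; case/onth_rows_prefix: E => ba an ->. Qed.

Lemma K4_missing_color_prefix r i u w : K4_missing_color r (prefix i) u w ->
  exists j x y, j < r /\ avoids j [:: u; w; y; x].
Proof.
case/hasP=> y _ /hasP[j]; rewrite mem_iota => /andP[_ jr].
case: ifP => // /and3P[/misses_prefix[wu un fuw] /misses_prefix[_ _ fuy]].
case/misses_prefix=> [yw _ fwy] /hasP[x _ /and3P[]].
case/misses_prefix=> [_ _ fux] /misses_prefix[_ _ fwx] /misses_prefix[xy _ fyx].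
exists j, x, y; split=> //; split.
- by rewrite /= !inE; lia.
- by rewrite /=; lia.
have fs a b : f a b != j -> f b a != j by rewrite f_sym.
move=> a b; rewrite !inE => /or4P[]/eqP-> /or4P[]/eqP->; rewrite ?eqxx // => _;
  by [| exact: fs].
Qed.

Lemma prune_prefix r D i u w k : u < n -> w < n -> prune r D (u, w) k (take i colors) ->
  [\/ D < count (fun y => (y != u) && (f u y == k)) (iota 0 n),
      D < count (fun y => (y != w) && (f w y == k)) (iota 0 n) |
      exists j x y, j < r /\ avoids j [:: u; w; y; x]].
Proof.
move=> un wn /=; case: ltnP => [/leq_trans/(_ (pdeg_prefix i k un))|_]; first by constructor 1.
case: ltnP => [/leq_trans/(_ (pdeg_prefix i k wn))|_]; first by constructor 2.
by move/K4_missing_color_prefix; constructor 3.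
Qed.
End PartialColoring.

Definition color_deg n r (c : 'I_n -> 'I_n -> 'I_r) (x : 'I_n) (k : 'I_r) : nat :=
  #|[set y | (y != x) && (c x y == k)]|.

Lemma card_set_count (T : finType) (P : pred T) : #|[set y | P y]| = count P (enum T).
Proof. by rewrite cardsE cardE -size_filter /enum_mem filter_predT. Qed.

Lemma color_deg_comp m n r (c : 'I_n -> 'I_n -> 'I_r) (p : 'I_m -> 'I_n) x k :
  injective p -> color_deg (fun a b => c (p a) (p b)) x k <= color_deg c (p x) k.
Proof.
move=> p_inj; rewrite /color_deg -(card_imset _ p_inj); apply: subset_leq_card.
apply/subsetP => _ /imsetP[y + ->]; rewrite !inE => /andP[yx cy].
by rewrite (inj_eq p_inj) yx.
Qed.

Lemma colors_on_comp m n r (c : 'I_n -> 'I_n -> 'I_r) (p : 'I_m -> 'I_n) S :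
  injective p -> colors_on (fun a b => c (p a) (p b)) S = colors_on c (p @: S).
Proof.
move=> p_inj; apply/setP => k; apply/imset2P/imset2P => [[x y xS]|[a b /imsetP[x xS ->]]].
  rewrite inE => /andP[yS xy] ->; exists (p x) (p y); rewrite ?imset_f //.
  by rewrite inE imset_f // (inj_eq p_inj).
rewrite inE => /andP[/imsetP[y yS ->] pxy] ->.
by exists x y; rewrite // inE yS; apply: contraNneq pxy => ->.
Qed.

Lemma GR_property_mono r s t m n : m <= n -> GR_property r s t m -> GR_property r s t n.
Proof.
move=> mn GRm c c_sym; set w := widen_ord mn.
have w_inj : injective w by move=> a b /(congr1 val) /=; exact: val_inj.
have [S [cardS colS]] := GRm (fun a b => c (w a) (w b)) (fun a b => c_sym _ _).
by exists (w @: S); rewrite card_imset // -colors_on_comp.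
Qed.

Section OrdinalColoring.
Variables (m r : nat) (c : 'I_m.+1 -> 'I_m.+1 -> 'I_r).

(* [inord] sends vertices beyond [m] to [ord0]; only [u, w <= m] are ever used. *)
Definition nat_coloring (u w : nat) : nat := c (inord u) (inord w).

Lemma count_nat_coloring z k : z <= m ->
  count (fun y => (y != z) && (nat_coloring z y == val k)) (iota 0 m.+1) =
  color_deg c (inord z) k.
Proof.
move=> zm; rewrite /color_deg card_set_count -val_enum_ord count_map.
apply: eq_count => y /=; rewrite /nat_coloring inord_val -val_eqE -(inj_eq val_inj) /=.
by rewrite inordK.
Qed.

Lemma few_colors_of_avoids j q : j < r -> avoids m.+1 nat_coloring j q ->
  #|[set x : 'I_m.+1 | val x \in q]| = size q /\
  #|colors_on c [set x : 'I_m.+1 | val x \in q]| <= r.-1.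
Proof.
move=> jr [uq qm qj]; split.
  rewrite card_set_count -(count_map val (mem q)) val_enum_ord -size_filter.
  apply/perm_size/uniq_perm; rewrite ?filter_uniq ?iota_uniq // => z.
  rewrite mem_filter mem_iota /=; case zq: (z \in q) => //=.
  exact: (allP qm).
apply: (@leq_trans #|[set~ Ordinal jr]|); last by rewrite cardsC1 card_ord.
apply: subset_leq_card.
apply/subsetP => _ /imset2P[x y + + ->]; rewrite !inE => xq /andP[yq xy].
by have := qj _ _ xq yq; rewrite /nat_coloring !inord_val -val_eqE; apply.
Qed.
End OrdinalColoring.

Lemma relabel_sorted m (v : 'I_m.+1) (leT : rel 'I_m.+1) : total leT ->
  exists p : 'I_m.+1 -> 'I_m.+1, [/\ injective p, p ord0 = v,
    perm_eq [seq p (inord i) | i <- iota 1 m] [seq y <- enum 'I_m.+1 | y != v] &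
    sorted leT [seq p (inord i) | i <- iota 1 m]].
Proof.
move=> leT_total; set N := [seq y <- enum 'I_m.+1 | y != v]; set L := sort leT N.
have sizeL : size L = m.
  rewrite size_sort size_filter -card_set_count.
  have -> : [set y | y != v] = [set~ v] by apply/setP => y; rewrite !inE.
  by rewrite cardsC1 card_ord.
have uniq_vL : uniq (v :: L).
  by rewrite /= mem_sort mem_filter eqxx sort_uniq filter_uniq ?enum_uniq.
have relabelL : [seq nth v (v :: L) (inord i : 'I_m.+1) | i <- iota 1 m] = L.
  rewrite -{2}(mkseq_nth v L) sizeL /mkseq (iotaDl 1 0) -map_comp.
  apply/eq_in_map => i; rewrite mem_iota => /andP[_ im].
  by rewrite /= inordK // add1n ltnS.
exists (nth v (v :: L)); rewrite relabelL; split=> //.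
- move=> i j /eqP; rewrite nth_uniq //= ?sizeL ?ltn_ord // => /eqP.
  exact: val_inj.
- by rewrite perm_sort perm_refl.
exact: sort_sorted.
Qed.

Fixpoint words (k m : nat) : seq (seq nat) :=
  if m is m'.+1 then [seq x :: s | x <- iota 0 k, s <- words k m'] else [:: [::]].

Lemma mem_words k m s : (s \in words k m) = (size s == m) && all (gtn k) s.
Proof.
elim: m s => [|m IH] [|x s] //=.
  by apply/allpairsPdep => -[? [? []]].
rewrite eqSS; apply/allpairsPdep/and3P => [[x' [s' [+ + [-> ->]]]]|[sm xk sk]].
  by rewrite mem_iota IH => /andP[_ ->] /andP[-> ->].
by exists x, s; rewrite mem_iota IH sm xk sk.
Qed.

Definition by_freq (p : seq nat) (a b : nat) : bool :=
  (count_mem b p < count_mem a p) || (count_mem a p == count_mem b p) && (a <= b).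

Lemma by_freq_total p : total (by_freq p).
Proof. by move=> a b; rewrite /by_freq; lia. Qed.

Lemma perm_by_freq p q : perm_eq p q -> by_freq p =2 by_freq q.
Proof. by move=> /permP pq a b; rewrite /by_freq !pq. Qed.

Lemma leq_foldr_maxn (x : nat) s : x \in s -> x <= foldr maxn 0 s.
Proof.
elim: s => //= y s IH; rewrite inE => /orP[/eqP->|/IH]; first exact: leq_maxl.
by move/leq_trans; apply; apply: leq_maxr.
Qed.

Definition max_multiplicity (p : seq nat) : nat :=
  foldr maxn 0 [seq count_mem k p | k <- iota 0 3].

Lemma count_le_max_multiplicity p k : k < 3 -> count_mem k p <= max_multiplicity p.
Proof. by move=> k3; apply/leq_foldr_maxn/mapP; exists k; rewrite ?mem_iota. Qed.

(* The possible colourings of the edges (1, 0), ..., (9, 0) after relabelling. *)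
Definition star_patterns : seq (seq nat) := [seq p <- words 3 9 | sorted (by_freq p) p].

Definition star_choices (p : seq nat) (e : nat * nat) : seq nat :=
  if e.2 == 0 then [:: nth 0 p e.1.-1] else iota 0 3.

Lemma K10_search :
  all (fun p => search (star_choices p) (prune 10 3 (max_multiplicity p)) (edges 10) [::])
    star_patterns.
Proof. by vm_compute. Qed.

Lemma star_normal_form (c : 'I_10 -> 'I_10 -> 'I_3) : edge_coloring c ->
  exists2 p : 'I_10 -> 'I_10, injective p &
  exists2 pat, pat \in star_patterns &
    let c' a b := c (p a) (p b) in
    (forall z k, color_deg c' z k <= max_multiplicity pat) /\
    {in edges 10, forall e, nat_coloring c' e.1 e.2 \in star_choices pat e}.
Proof.
move=> c_sym.
have [[v k0] _ deg_max] :=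
  @arg_maxnP _ (ord0, ord0) xpredT (fun vk => color_deg c vk.1 vk.2) isT.
pose g y := val (c v y); pose P := [seq g y | y <- [seq y <- enum 'I_10 | y != v]].
have [p [p_inj p0 p_perm p_sorted]] :=
  @relabel_sorted 9 v (relpre g (by_freq P)) (fun a b => by_freq_total P (g a) (g b)).
pose pat := map g [seq p (inord i) | i <- iota 1 9].
have pat_perm : perm_eq pat P by apply: perm_map.
exists p => //; exists pat; last split.
- rewrite mem_filter (eq_sorted (perm_by_freq pat_perm)) sorted_map p_sorted.
  rewrite mem_words !size_map size_iota eqxx all_map.
  by apply/allP => y _; rewrite /= ltn_ord.
- move=> z k; apply: leq_trans (color_deg_comp _ _ _ p_inj) _.
  apply: leq_trans (deg_max (p z, k) isT) _ => /=.
  have -> : color_deg c v k0 = count_mem (val k0) pat.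
    rewrite (permP pat_perm) count_map count_filter /color_deg card_set_count.
    by apply: eq_count => y /=; rewrite andbC.
  exact/count_le_max_multiplicity/ltn_ord.
case=> u w; rewrite mem_edges => /andP[wu u10]; rewrite /star_choices.
case: eqP => [/= w0|_]; last by rewrite mem_iota /nat_coloring ltn_ord.
move: wu; rewrite w0 inE => u0; apply/eqP.
have u9 : u.-1 < 9 by rewrite -ltnS prednK.
rewrite (nth_map ord0) ?size_map ?size_iota // (nth_map 0) ?size_iota //.
rewrite nth_iota // add1n prednK // /nat_coloring /g c_sym.
by rewrite (_ : inord 0 = ord0) ?p0 //; apply: val_inj; rewrite /= inordK.
Qed.

Lemma few_colored_K4_of_star (c : 'I_10 -> 'I_10 -> 'I_3) pat :
  edge_coloring c -> pat \in star_patterns ->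
  (forall z k, color_deg c z k <= max_multiplicity pat) ->
  {in edges 10, forall e, nat_coloring c e.1 e.2 \in star_choices pat e} ->
  exists S : {set 'I_10}, #|S| = 4 /\ #|colors_on c S| <= 2.
Proof.
move=> c_sym pat_star deg_pat star_c; pose f := nat_coloring c.
have f_sym u w : f u w = f w u by rewrite /f /nat_coloring c_sym.
have [es1 [[u w] [es2 [edgesE pruned]]]] :=
  search_sound star_c (allP K10_search pat pat_star).
have /andP[wu u10] : w < u < 10 by rewrite -mem_edges edgesE mem_cat mem_head orbT.
have w10 := ltn_trans wu u10.
have prefixE : take (size es1).+1 [seq f e.1 e.2 | e <- edges 10] =
    [seq f e.1 e.2 | e <- rcons es1 (u, w)].
  by rewrite edgesE map_cat take_cat size_map ltnNge leqnSn subSnn map_rcons -cats1 /= take0.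
have deg_bound z : z < 10 ->
    count (fun y => (y != z) && (f z y == f u w)) (iota 0 10) <= max_multiplicity pat.
  by move=> z10; rewrite (count_nat_coloring c (c (inord u) (inord w)) (z10 : z <= 9)) deg_pat.
rewrite cat0s -prefixE in pruned.
case: (prune_prefix f_sym u10 w10 pruned) => [deg|deg|[j [x [y [j3 av]]]]].
- by move: deg; rewrite ltnNge deg_bound.
- by move: deg; rewrite ltnNge deg_bound.
have [cardS colS] := few_colors_of_avoids j3 av.
by exists [set a | val a \in [:: u; w; y; x]].
Qed.

Theorem GR_K4_le10 : GR_property 3 4 2 10.
Proof.
move=> c c_sym; have [p p_inj [pat pat_star [deg star_c]]] := star_normal_form c_sym.
have [S [cardS colS]] := few_colored_K4_of_star (fun a b => c_sym _ _) pat_star deg star_c.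
by exists (p @: S); rewrite card_imset // -colors_on_comp.
Qed.

(* Lower triangle of the colouring of K_9: row [u] lists the colours of
   (u, 0), ..., (u, u-1). *)
Definition K9_rows : seq (seq nat) :=
  [:: [::];
      [:: 0];
      [:: 0; 0];
      [:: 0; 1; 2];
      [:: 0; 2; 1; 0];
      [:: 1; 0; 2; 2; 0];
      [:: 1; 2; 0; 0; 2; 1];
      [:: 2; 0; 1; 0; 1; 0; 0];
      [:: 2; 1; 0; 1; 0; 0; 0; 2]].

Definition K9_color (u w : nat) : nat := nth 0 (nth [::] K9_rows (maxn u w)) (minn u w).

Definition rainbow (q : seq nat) : bool :=
  all (fun k => has (fun a => has (fun b => (a != b) && (K9_color a b == k)) q) q) (iota 0 3).

Lemma K9_rainbow : all (fun q => ~~ uniq q || rainbow q) (words 9 4).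
Proof. by vm_compute. Qed.

Theorem not_GR_K4_9 : ~ GR_property 3 4 2 9.
Proof.
pose c (a b : 'I_9) : 'I_3 := inord (K9_color a b).
have c_sym : edge_coloring c by move=> a b; rewrite /c /K9_color maxnC minnC.
move=> /(_ c c_sym) [S [cardS colS]].
pose q := map val (enum S).
have q_words : q \in words 9 4.
  by rewrite mem_words size_map -cardE cardS all_map; apply/allP => a _ /=.
have := allP K9_rainbow q q_words; rewrite map_inj_uniq ?enum_uniq //=; last exact: val_inj.
move=> /allP rb; suff : #|[set: 'I_3]| <= #|colors_on c S|.
  by rewrite cardsT card_ord leqNgt ltnS colS.
apply/subset_leq_card/subsetP => k _.
have k3 : val k \in iota 0 3 by rewrite mem_iota ltn_ord.
have /hasP[_ /mapP[a aS ->] /hasP[_ /mapP[b bS ->] /andP[ab /eqP cab]]] := rb _ k3.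
move: aS bS; rewrite !mem_enum => aS bS; apply/imset2P; exists a b => //.
  by rewrite inE bS; apply: contraNneq ab => ->.
by rewrite /c cab inord_val.
Qed.

Theorem mainTheorem9 : is_GR 3 4 2 10.
Proof.
split=> [|m m_lt10 GRm]; first exact: GR_K4_le10.
exact: not_GR_K4_9 (@GR_property_mono 3 4 2 m 9 m_lt10 GRm).
Qed.
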